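(* Let $n,d\in\mathbb N$, $t\in[0,1]$, weights $\omega_0,\ldots,\omega_n>0$ and points $\mathbf W_0,\ldots,\mathbf W_n\in\mathbb R^d$ be given. Let $B^n_k(t):=\binom nk t^k(1-t)^{n-k}$ and $$\mathbf R_n(t):=\frac{\sum_{k=0}^n\omega_k\mathbf W_kB^n_k(t)}{\sum_{k=0}^n\omega_kB^n_k(t)}.$$ Define $h_0:=1$, $\mathbf Q_0:=\mathbf W_0$ and, for $k=1,\ldots,n$, $$h_k:=\frac{\omega_kh_{k-1}t(n-k+1)}{\omega_{k-1}k(1-t)+\omega_kh_{k-1}t(n-k+1)},\qquad \mathbf Q_k:=(1-h_k)\mathbf Q_{k-1}+h_k\mathbf W_k.$$ Then for all $k=0,1,\ldots,n$: $h_k\in[0,1]$, $\mathbf Q_k\in\mathbb R^d$, and $\mathbf Q_k\in\operatorname{conv}\{\mathbf W_0,\ldots,\mathbf W_k\}$ (so $\operatorname{conv}\{\mathbf Q_0,\ldots,\mathbf Q_k\}\subseteq\operatorname{conv}\{\mathbf W_0,\ldots,\mathbf W_k\}$). Moreover, $\mathbf R_n(t)=\mathbf Q_n$.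
   Context: $\operatorname{conv}$ denotes the convex hull; $\mathbb E^d$ of the paper is identified with $\mathbb R^d$. $\mathbf R_n$ is the rational Bézier curve of degree $n$ with the given weights and control points. *)

From mathcomp Require Import all_boot all_order all_algebra.
Set Implicit Arguments. Unset Strict Implicit. Unset Printing Implicit Defensive.
Import Order.TTheory GRing.Theory Num.Theory.
Local Open Scope ring_scope.

Definition bernstein (R : ringType) (n k : nat) (t : R) : R :=
  'C(n, k)%:R * t ^+ k * (1 - t) ^+ (n - k).

Definition rat_bezier (R : fieldType) (d n : nat) (w : nat -> R)
  (W : nat -> 'rV[R]_d) (t : R) : 'rV[R]_d :=
  (\sum_(k < n.+1) w k * bernstein n k t)^-1 *:
    \sum_(k < n.+1) (w k * bernstein n k t) *: W k.

Fixpoint hcoef (R : fieldType) (n : nat) (w : nat -> R) (t : R) (k : nat) : R :=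
  match k with
  | 0 => 1
  | k'.+1 =>
      let hp := hcoef n w t k' in
      let num := w k'.+1 * hp * t * (n - k'.+1 + 1)%:R in
      num / (w k' * (k'.+1)%:R * (1 - t) + num)
  end.

Fixpoint Qpt (R : fieldType) (d n : nat) (w : nat -> R) (W : nat -> 'rV[R]_d)
  (t : R) (k : nat) : 'rV[R]_d :=
  match k with
  | 0 => W 0
  | k'.+1 => (1 - hcoef n w t k'.+1) *: Qpt n w W t k' + hcoef n w t k'.+1 *: W k'.+1
  end.

Definition in_conv (R : numDomainType) (d : nat) (P : nat -> 'rV[R]_d) (k : nat)
  (x : 'rV[R]_d) : Prop :=
  exists lam : nat -> R,
    (forall i, (i <= k)%N -> 0 <= lam i) /\
    \sum_(i < k.+1) lam i = 1 /\
    x = \sum_(i < k.+1) lam i *: P i.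

From mathcomp Require Import all_boot all_order all_algebra.
From mathcomp Require Import ring.
Set Implicit Arguments. Unset Strict Implicit.
Import Order.TTheory GRing.Theory Num.Theory.
Local Open Scope ring_scope.

(* Each h_k has the form a / (b + a) with a, b >= 0, so it lies in [0, 1] and
   Q_k, a convex combination of Q_(k-1) and W_k, stays in conv{W_0, ..., W_k}.
   For the identity, let S_k and T_k be the partial sums up to k of the
   denominator and numerator of R_n(t).  The Bernstein relation
   (k+1)(1-t) B_(k+1) = (n-k) t B_k turns the recursion defining h_k into
   h_k S_k = w_k B_k; hence (1 - h_k) S_k = S_(k-1) and, by induction,
   S_k Q_k = T_k.  At k = n this is R_n(t) = T_n / S_n = Q_n, where S_n > 0
   because the Bernstein polynomials are a partition of unity. *)

Section Bernstein.
Variable R : comNzRingType.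

Lemma sum_bernstein n (t : R) : \sum_(k < n.+1) bernstein n k t = 1.
Proof.
transitivity ((1 - t + t) ^+ n); last by rewrite subrK expr1n.
rewrite exprDn; apply: eq_bigr => k _.
by rewrite /bernstein -mulr_natl; ring.
Qed.

Lemma bernsteinS n k (t : R) : (k < n)%N ->
  k.+1%:R * (1 - t) * bernstein n k.+1 t = (n - k)%:R * t * bernstein n k t.
Proof.
move=> lt_kn; rewrite /bernstein.
have bin_eq : k.+1%:R * 'C(n, k.+1)%:R = (n - k)%:R * 'C(n, k)%:R :> R.
  by rewrite -!natrM mul_bin_left.
transitivity (k.+1%:R * 'C(n, k.+1)%:R * (t ^+ k.+1 * (1 - t) ^+ (n - k))).
  by rewrite -(subnSK lt_kn) !exprS; ring.
by rewrite bin_eq exprS; ring.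
Qed.

End Bernstein.

Lemma bernstein_ge0 (R : numDomainType) n k (t : R) :
  0 <= t <= 1 -> 0 <= bernstein n k t.
Proof. by case/andP=> t_ge0 t_le1; rewrite !mulr_ge0 ?exprn_ge0 ?subr_ge0. Qed.

Lemma divrDl_ge0_le1 (R : numFieldType) (a b : R) :
  0 <= a -> 0 <= b -> 0 <= a / (b + a) <= 1.
Proof.
move=> a_ge0 b_ge0; have [->|nz] := eqVneq (b + a) 0.
  by rewrite invr0 mulr0 lexx ler01.
have den_gt0 : 0 < b + a by rewrite lt_def nz addr_ge0.
by rewrite divr_ge0 ?(ltW den_gt0) //= ler_pdivrMr // mul1r ler_wpDl.
Qed.

Lemma hcoefS (R : fieldType) n (w : nat -> R) t k : (k < n)%N ->
  hcoef n w t k.+1 =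
    w k.+1 * hcoef n w t k * t * (n - k)%:R /
    (w k * k.+1%:R * (1 - t) + w k.+1 * hcoef n w t k * t * (n - k)%:R).
Proof. by move=> lt_kn; rewrite /= addn1 subnSK. Qed.

Lemma QptS (R : fieldType) d n (w : nat -> R) (W : nat -> 'rV[R]_d) t k :
  Qpt n w W t k.+1 =
    (1 - hcoef n w t k.+1) *: Qpt n w W t k + hcoef n w t k.+1 *: W k.+1.
Proof. by []. Qed.

Section ConvexHull.
Variables (R : numDomainType) (d : nat).
Implicit Types (P W : nat -> 'rV[R]_d) (x y : 'rV[R]_d).

Lemma in_conv_point W k j : (j <= k)%N -> in_conv W k (W j).
Proof.
move=> le_jk; exists (fun i => if i == j then 1 else 0); split; [|split].
- by move=> i _; case: eqP; rewrite ?ler01 ?lexx.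
- by rewrite -big_mkcond (big_ord1_eq _ (fun=> 1)) ltnS le_jk.
- rewrite (eq_bigr (fun i : 'I_k.+1 => if (i : nat) == j then W i else 0)).
    by rewrite -big_mkcond big_ord1_eq ltnS le_jk.
  by move=> i _; case: eqP; rewrite ?scale1r ?scale0r.
Qed.

Lemma in_conv_hull P W k m x :
  (forall j, (j <= k)%N -> in_conv W m (P j)) -> in_conv P k x -> in_conv W m x.
Proof.
move=> P_in [mu [mu_ge0 [mu_sum1 ->]]].
have /fin_all_exists [lam lamP] : forall j : 'I_k.+1, exists lam : nat -> R,
    (forall i, (i <= m)%N -> 0 <= lam i) /\
    \sum_(i < m.+1) lam i = 1 /\ P j = \sum_(i < m.+1) lam i *: W i.
  by move=> j; apply: P_in; rewrite -ltnS.
exists (fun i => \sum_(j < k.+1) mu j * lam j i); split; [|split].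
- move=> i le_im; apply: sumr_ge0 => j _.
  by rewrite mulr_ge0 ?mu_ge0 ?(lamP j).1 // -ltnS.
- rewrite exchange_big /= -mu_sum1; apply: eq_bigr => j _.
  by rewrite -mulr_sumr (lamP j).2.1 mulr1.
- under [RHS]eq_bigr do rewrite scaler_suml.
  rewrite [RHS]exchange_big /=; apply: eq_bigr => j _.
  rewrite (lamP j).2.2 scaler_sumr; apply: eq_bigr => i _.
  by rewrite scalerA.
Qed.

Lemma in_conv_widen W k m x : (k <= m)%N -> in_conv W k x -> in_conv W m x.
Proof.
move=> le_km; apply: in_conv_hull => j le_jk.
by apply: in_conv_point; apply: leq_trans le_km.
Qed.

Lemma in_conv_segment W k x y (h : R) : 0 <= h <= 1 ->
  in_conv W k x -> in_conv W k y -> in_conv W k ((1 - h) *: x + h *: y).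
Proof.
case/andP=> h_ge0 h_le1 x_in y_in.
apply: (@in_conv_hull (fun j => if j is 0 then x else y) W 1) => [[|j] _ //|].
exists (fun i => if i is 0 then 1 - h else h); split; [|split].
- by case=> [|i] _; rewrite ?subr_ge0.
- by rewrite !big_ord_recr big_ord0 /= add0r subrK.
- by rewrite !big_ord_recr big_ord0 /= add0r.
Qed.

End ConvexHull.

Section RationalBezier.
Variables (R : realFieldType) (n d : nat) (t : R) (w : nat -> R).
Variable W : nat -> 'rV[R]_d.
Hypothesis t01 : 0 <= t <= 1.
Hypothesis w_gt0 : forall k, (k <= n)%N -> 0 < w k.

Let w_ge0 k : (k <= n)%N -> 0 <= w k.
Proof. by move/w_gt0/ltW. Qed.

Lemma hcoef_ge0_le1 k : (k <= n)%N -> 0 <= hcoef n w t k <= 1.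
Proof.
case/andP: t01 => t_ge0 t_le1.
elim: k => [|k IHk] lt_kn; first by rewrite ler01 lexx.
have le_kn := ltnW lt_kn; have /andP[h_ge0 _] := IHk le_kn.
by rewrite hcoefS // divrDl_ge0_le1 // !mulr_ge0 ?w_ge0 ?ler0n ?subr_ge0.
Qed.

Lemma hcoef_gt0 k : 0 < t -> (k <= n)%N -> 0 < hcoef n w t k.
Proof.
case/andP: t01 => _ t_le1 t_gt0.
elim: k => [|k IHk] lt_kn; first exact: ltr01.
have le_kn := ltnW lt_kn.
have num_gt0 : 0 < w k.+1 * hcoef n w t k * t * (n - k)%:R.
  by rewrite !mulr_gt0 ?w_gt0 ?IHk ?ltr0n ?subn_gt0.
by rewrite hcoefS // divr_gt0 // ltr_wpDl // !mulr_ge0 ?w_ge0 ?ler0n ?subr_ge0.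
Qed.

Lemma hcoef_den_gt0 k : (k < n)%N ->
  0 < w k * k.+1%:R * (1 - t) + w k.+1 * hcoef n w t k * t * (n - k)%:R.
Proof.
case/andP: t01 => t_ge0 t_le1 lt_kn; have le_kn := ltnW lt_kn.
have [t_lt1|t_ge1] := ltP t 1.
  have /andP[h_ge0 _] := hcoef_ge0_le1 le_kn.
  by rewrite ltr_pwDl ?mulr_ge0 ?w_ge0 ?ler0n // !mulr_gt0 ?w_gt0 ?ltr0n ?subr_gt0.
have t_gt0 : 0 < t := lt_le_trans ltr01 t_ge1.
rewrite ltr_wpDl ?mulr_ge0 ?w_ge0 ?ler0n ?subr_ge0 //.
by rewrite !mulr_gt0 ?w_gt0 ?hcoef_gt0 ?ltr0n ?subn_gt0.
Qed.

Let bezier_den k := \sum_(i < k.+1) w i * bernstein n i t.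
Let bezier_num k := \sum_(i < k.+1) (w i * bernstein n i t) *: W i.

Lemma hcoef_mul_bezier_den k : (k <= n)%N ->
  hcoef n w t k * bezier_den k = w k * bernstein n k t.
Proof.
elim: k => [|k IHk] le_kn; first by rewrite /bezier_den big_ord1 mul1r.
have IH := IHk (ltnW le_kn).
rewrite hcoefS // /bezier_den big_ord_recr /= -/(bezier_den k).
set num := w k.+1 * _ * _ * _; set a := w k * _ * _.
have num_den : num * bezier_den k = w k.+1 * bernstein n k.+1 t * a.
  transitivity (w k.+1 * t * (n - k)%:R * (hcoef n w t k * bezier_den k)).
    by rewrite /num; ring.
  transitivity (w k.+1 * w k * ((n - k)%:R * t * bernstein n k t)).
    by rewrite IH; ring.
  by rewrite -bernsteinS // /a; ring.
apply: (mulIf (lt0r_neq0 (hcoef_den_gt0 le_kn))).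
rewrite mulrAC divfK ?lt0r_neq0 ?hcoef_den_gt0 // mulrDr num_den mulrDr.
by congr (_ + _); rewrite mulrC.
Qed.

Lemma bezier_den_scale_Qpt k : (k <= n)%N ->
  bezier_den k *: Qpt n w W t k = bezier_num k.
Proof.
elim: k => [|k IHk] le_kn; first by rewrite /bezier_den /bezier_num !big_ord1.
have h_den := hcoef_mul_bezier_den le_kn.
have one_sub_h : bezier_den k.+1 * (1 - hcoef n w t k.+1) = bezier_den k.
  by rewrite mulrBr mulr1 mulrC h_den /bezier_den big_ord_recr addrK.
rewrite QptS scalerDr !scalerA one_sub_h (IHk (ltnW le_kn)).
by rewrite [_ * hcoef _ _ _ _]mulrC h_den /bezier_num [RHS]big_ord_recr.
Qed.

Lemma bezier_den_gt0 : 0 < bezier_den n.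
Proof.
have w_ord_gt0 (i : 'I_n.+1) : 0 < w i by apply: w_gt0; rewrite -ltnS.
have terms_ge0 (i : 'I_n.+1) : true -> 0 <= w i * bernstein n i t.
  by move=> _; rewrite mulr_ge0 ?bernstein_ge0 ?(ltW (w_ord_gt0 i)).
rewrite lt_def sumr_ge0 // andbT; apply/eqP => /(psumr_eq0P terms_ge0) den0.
have := sum_bernstein n t; rewrite big1 => [/eqP|i _].
  by rewrite eq_sym oner_eq0.
by apply: (mulfI (lt0r_neq0 (w_ord_gt0 i))); rewrite mulr0 den0.
Qed.

Lemma rat_bezier_Qpt : rat_bezier n w W t = Qpt n w W t n.
Proof.
rewrite /rat_bezier -/(bezier_den n) -/(bezier_num n) -bezier_den_scale_Qpt //.
by rewrite scalerA mulVf ?scale1r ?lt0r_neq0 ?bezier_den_gt0.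
Qed.

Lemma Qpt_in_conv k : (k <= n)%N -> in_conv W k (Qpt n w W t k).
Proof.
elim: k => [|k IHk] le_kn; first exact: in_conv_point.
rewrite QptS; apply: in_conv_segment; first exact: hcoef_ge0_le1.
  exact: in_conv_widen (leqnSn k) (IHk (ltnW le_kn)).
exact: in_conv_point.
Qed.

End RationalBezier.

Theorem theorem3 (R : realFieldType) (n d : nat) (t : R) (w : nat -> R)
  (W : nat -> 'rV[R]_d) :
  0 <= t <= 1 ->
  (forall k, (k <= n)%N -> 0 < w k) ->
  (forall k, (k <= n)%N ->
     [/\ 0 <= hcoef n w t k <= 1,
         in_conv W k (Qpt n w W t k) &
         forall x, in_conv (Qpt n w W t) k x -> in_conv W k x]) /\
  rat_bezier n w W t = Qpt n w W t n.
Proof.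
move=> t01 w_gt0; split; last exact: rat_bezier_Qpt.
move=> k le_kn; split; [exact: hcoef_ge0_le1 | exact: Qpt_in_conv |].
move=> x; apply: in_conv_hull => j le_jk.
apply: (in_conv_widen le_jk); apply: Qpt_in_conv => //.
exact: leq_trans le_jk le_kn.
Qed.
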